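(* Consider the two-layer multi-item order fulfillment problem described in the context with a single FDC ($K=1$), any fixed costs $f_0,f_1\ge0$, and variable costs in $[a,b]$ for constants $b>a>0$. Then every online fulfillment policy $\mathrm{ALG}$ (deterministic or randomized) satisfies \[\mathfrak R(\mathrm{ALG})\ge\max\left\{1,\ \frac13\sqrt{\frac ba},\ \frac14\max_{n\ge2}\min\left\{n,\ \frac{f_0}{f_1+na}\right\}\right\},\] where the inner maximum is over integers $n\ge 2$.
   Context: Problem with one FDC (index $1$) and one RDC (index $0$, unlimited inventory). The FDC initially holds $I_{1,0}^i\ge0$ units of item $i$, never replenished. In periods $t=1,\dots,T$ an order $\boldsymbol S_t=(S_t^i)_i$ of nonnegative integers arrives; after observing it and the variable costs $c_{k,t}^i$, the policy must immediately and irrevocably choose $m_{0,t}^i,m_{1,t}^i\ge0$ with $m_{0,t}^i+m_{1,t}^i=S_t^i$ and $m_{1,t}^i\le I_{1,t-1}^i$, $I_{1,t}^i=I_{1,0}^i-\sum_{\tau\le t}m_{1,\tau}^i$. Period cost $\sum_{k=0,1}[f_k\mathbb{I}(\sum_im_{k,t}^i>0)+\sum_ic_{k,t}^im_{k,t}^i]$; total cost is the sum. An online policy (possibly randomized) decides in period $t$ using only fixed costs, initial inventories and orders/variable costs up to $t$. $\mathfrak R(\mathrm{ALG})$ is the supremum of $\mathrm{ALG}(I)/\mathrm{OPT}(I)$ ((expected) policy cost over offline optimal cost) over all numbers of items, horizons $T$, initial inventories, variable costs in $[a,b]$ and order sequences. *)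

From HB Require Import structures.
From mathcomp Require Import all_boot all_order all_algebra.
From mathcomp Require Import classical_sets reals constructive_ereal ereal.

Set Implicit Arguments.
Unset Strict Implicit.
Unset Printing Implicit Defensive.

Import Order.TTheory GRing.Theory Num.Theory.
Local Open Scope ring_scope.
Local Open Scope classical_set_scope.

Section Model.
Variable R : realType.

(* Data revealed in one period, for an instance with N items (indexed by 'I_N):
   the order S_t^i and the variable costs c_{0,t}^i (RDC) and c_{1,t}^i (FDC). *)
Record period (N : nat) := Period {
  ord : 'I_N -> nat;
  cost0 : 'I_N -> R;
  cost1 : 'I_N -> R }.

(* A decision: the quantities m_{1,t}^i shipped from the FDC;
   m_{0,t}^i := S_t^i - m_{1,t}^i is shipped from the RDC. *)
Definition dec (N : nat) := 'I_N -> nat.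

Definition stage_cost (f0 f1 : R) N (p : period N) (m1 : dec N) : R :=
  let m0 := fun i => (ord p i - m1 i)%N in
  (if (0 < \sum_i m0 i)%N then f0 else 0) +
  (if (0 < \sum_i m1 i)%N then f1 else 0) +
  \sum_i ((cost0 p i) * (m0 i)%:R + (cost1 p i) * (m1 i)%:R).

Definition remaining N (I0 : 'I_N -> nat) (hist : seq (period N * dec N)) (i : 'I_N) : nat :=
  (I0 i - \sum_(x <- hist) x.2 i)%N.

Definition feasible_dec N (inv : 'I_N -> nat) (p : period N) (m : dec N) : bool :=
  [forall i, (m i <= ord p i)%N && (m i <= inv i)%N].

(* A (possibly randomized) online policy, in behavioural form: given the number
   of items N, the initial inventories I0, the history of past periods together
   with its own past decisions, and the data of the current period, it returns a
   finitely supported probability distribution over decisions, as a list of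
   (probability, decision) pairs.  It does not know the horizon T.  Fixed costs
   and the cost range are fixed parameters of the setting. *)
Definition policy :=
  forall N : nat, ('I_N -> nat) -> seq (period N * dec N) -> period N -> seq (R * dec N).

Definition valid_policy (pol : policy) : Prop :=
  forall N (I0 : 'I_N -> nat) (hist : seq (period N * dec N)) (p : period N),
    all (fun x => (0 <= x.1) && feasible_dec (remaining I0 hist) p x.2) (pol N I0 hist p)
    /\ \sum_(x <- pol N I0 hist p) x.1 = 1.

Fixpoint exp_cost (f0 f1 : R) (pol : policy) N (I0 : 'I_N -> nat)
    (hist : seq (period N * dec N)) (ps : seq (period N)) : R :=
  match ps with
  | [::] => 0
  | p :: ps' =>
      \sum_(x <- pol N I0 hist p)
         x.1 * (stage_cost f0 f1 p x.2 + exp_cost f0 f1 pol I0 (rcons hist (p, x.2)) ps')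
  end.

Fixpoint plan_ok N (inv : 'I_N -> nat) (ps : seq (period N)) (ms : seq (dec N)) : Prop :=
  match ps, ms with
  | [::], [::] => True
  | p :: ps', m :: ms' => feasible_dec inv p m /\ plan_ok (fun i => (inv i - m i)%N) ps' ms'
  | _, _ => False
  end.

Fixpoint plan_cost (f0 f1 : R) N (ps : seq (period N)) (ms : seq (dec N)) : R :=
  match ps, ms with
  | p :: ps', m :: ms' => stage_cost f0 f1 p m + plan_cost f0 f1 ps' ms'
  | _, _ => 0
  end.

Definition OPT (f0 f1 : R) N (I0 : 'I_N -> nat) (ps : seq (period N)) : R :=
  inf [set x : R | exists ms, plan_ok I0 ps ms /\ x = plan_cost f0 f1 ps ms].

Definition costs_in (a b : R) N (ps : seq (period N)) : bool :=
  all (fun p => [forall i, (a <= cost0 p i <= b) && (a <= cost1 p i <= b)]) ps.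

(* Competitive ratio: supremum over all instances (number of items N, initial
   inventories I0, horizon T = size ps, order/cost sequences ps with costs in
   [a,b]) of expected policy cost over offline optimal cost; instances with
   OPT = 0 (i.e. no demand at all) are excluded since the ratio is 0/0. *)
Definition comp_ratio (f0 f1 a b : R) (pol : policy) : \bar R :=
  ereal_sup [set (x%:E)%E | x in
    [set x : R | exists N (I0 : 'I_N -> nat) (ps : seq (period N)),
       [/\ costs_in a b ps, 0 < OPT f0 f1 I0 ps &
           x = exp_cost f0 f1 pol I0 [::] ps / OPT f0 f1 I0 ps]]].

End Model.

(* Each bound is forced by an adversary that shows the policy one period and
   then either stops or continues; the policy's (randomized) first decision
   can suit only one of the continuations.
   - With an empty FDC every unit goes through the RDC, so nothing beats the
     offline optimum.
   - One item with Q units in the FDC receives an order of Q units at RDC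
     cost x = sqrt (a b) = a r, where r = sqrt (b / a).  Shipping mu units from the
     FDC saves (x - a) mu now, but if the order recurs at RDC cost b it costs
     (b - x) mu then.  Against offline costs f1 + a Q and f0 + f1 + (x + a) Q,
     ratio below r / 3 in both scenarios is impossible once Q is large.
   - n items with one unit each in the FDC are ordered at once.  Emptying the
     FDC saves the fixed cost f0 now but exposes n later single-item orders to
     f0 each; not emptying it pays f0 against an offline cost f1 + n a.  One
     scenario loses a factor min (n, f0 / (f1 + n a)) / 4. *)

From HB Require Import structures.
From mathcomp Require Import all_boot all_order all_algebra.
From mathcomp Require Import classical_sets reals constructive_ereal ereal.
From mathcomp Require Import lra.
Set Implicit Arguments.
Unset Strict Implicit.
Unset Printing Implicit Defensive.

Import Order.TTheory GRing.Theory Num.Theory.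
Local Open Scope ring_scope.

Section WeightedSum.
Variables (R : numDomainType) (T : Type).
Implicit Types (s : seq (R * T)) (c d : R).

Lemma wsum_const s c : \sum_(x <- s) x.1 = 1 -> \sum_(x <- s) x.1 * c = c.
Proof. by move=> s1; rewrite -mulr_suml s1 mul1r. Qed.

Lemma wsum_affine s c d (h : T -> R) : \sum_(x <- s) x.1 = 1 ->
  \sum_(x <- s) x.1 * (c + d * h x.2) = c + d * \sum_(x <- s) x.1 * h x.2.
Proof.
move=> s1; rewrite mulr_sumr -[in RHS](wsum_const c s1) -big_split /=.
by apply: eq_bigr => x _; rewrite mulrDr mulrCA.
Qed.

Lemma ler_wsum s (P : pred T) (G F : T -> R) :
  all (fun x => (0 <= x.1) && P x.2) s -> (forall t, P t -> G t <= F t) ->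
  \sum_(x <- s) x.1 * G x.2 <= \sum_(x <- s) x.1 * F x.2.
Proof.
move=> + GF; elim: s => [|x s IH] /=; first by rewrite !big_nil.
by case/andP => /andP[x0 Px] /IH le_s; rewrite !big_cons lerD // ler_wpM2l // GF.
Qed.

End WeightedSum.

Section Costs.
Variables (R : realType) (f0 f1 : R).
Hypotheses (f0_ge0 : 0 <= f0) (f1_ge0 : 0 <= f1).
Local Notation stage_cost := (stage_cost f0 f1).
Local Notation exp_cost := (exp_cost f0 f1).
Local Notation plan_cost := (plan_cost f0 f1).
Local Notation OPT := (OPT f0 f1).

Lemma remaining_rcons N (I0 : 'I_N -> nat) hist y i :
  (remaining (R:=R) I0 (rcons hist y) i <= remaining I0 hist i)%N.
Proof. by rewrite /remaining -cats1 big_cat big_seq1 leq_sub2l // leq_addr. Qed.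

Lemma feasible_decW N (inv inv' : 'I_N -> nat) (p : period R N) m :
  (forall i, inv i <= inv' i)%N -> feasible_dec inv p m -> feasible_dec inv' p m.
Proof.
move=> le_inv /forallP Fm; apply/forallP => i; case/andP: (Fm i) => -> /= mi.
exact: leq_trans mi (le_inv i).
Qed.

Lemma feasible_dec_le_ord N (inv : 'I_N -> nat) (p : period R N) m :
  feasible_dec inv p m -> forall i, (m i <= ord p i)%N.
Proof. by move=> /forallP Fm i; case/andP: (Fm i). Qed.

Lemma feasible_dec_le_inv N (inv : 'I_N -> nat) (p : period R N) m :
  feasible_dec inv p m -> forall i, (m i <= inv i)%N.
Proof. by move=> /forallP Fm i; case/andP: (Fm i). Qed.

Lemma costs_in_ge a b N (ps : seq (period R N)) p : costs_in a b ps ->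
  List.In p ps -> forall i, a <= cost0 p i /\ a <= cost1 p i.
Proof.
elim: ps => [|q ps IH] //= /andP[/forallP cq cps] [<- i|]; last exact: IH.
by case/andP: (cq i) => /andP[-> _] /andP[-> _].
Qed.

Lemma stage_cost_ge_var N (p : period R N) m :
  \sum_i (cost0 p i * (ord p i - m i)%:R + cost1 p i * (m i)%:R) <= stage_cost p m.
Proof. by rewrite /stage_cost ler_wpDl // addr_ge0 //; case: ifP. Qed.

Lemma stage_cost_ge_demand N (p : period R N) m a :
  (forall i, m i <= ord p i)%N -> (forall i, a <= cost0 p i /\ a <= cost1 p i) ->
  a * \sum_i (ord p i)%:R <= stage_cost p m.
Proof.
move=> m_le ca; apply: le_trans (stage_cost_ge_var p m); rewrite mulr_sumr.
apply: ler_sum => i _; have [c0 c1] := ca i.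
rewrite -(subnK (m_le i)) natrD mulrDr addnK.
by apply: lerD; apply: ler_wpM2r.
Qed.

Lemma stage_cost_ge0 N (p : period R N) m :
  (forall i, m i <= ord p i)%N -> (forall i, 0 <= cost0 p i /\ 0 <= cost1 p i) ->
  0 <= stage_cost p m.
Proof. by move=> m_le c0; have := stage_cost_ge_demand m_le c0; rewrite mul0r. Qed.

Lemma stage_cost_ge_f0 N (p : period R N) m i :
  (m i < ord p i)%N -> (forall i, 0 <= cost0 p i /\ 0 <= cost1 p i) ->
  f0 <= stage_cost p m.
Proof.
move=> mi c0; have pos : (0 < \sum_k (ord p k - m k))%N.
  by rewrite (bigD1 i) //= addn_gt0 subn_gt0 mi.
rewrite /stage_cost pos -addrA lerDl addr_ge0 //; first by case: ifP.
apply: sumr_ge0 => k _; have [c0k c1k] := c0 k.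
by rewrite addr_ge0 // mulr_ge0.
Qed.

Section Policy.
Variables (pol : policy R) (N : nat) (I0 : 'I_N -> nat).
Hypothesis pol_valid : valid_policy pol.

Lemma exp_cost_cons_ge hist p ps c d (h : dec N -> R) :
  (forall m, feasible_dec (remaining I0 hist) p m ->
     c + d * h m <= stage_cost p m + exp_cost pol I0 (rcons hist (p, m)) ps) ->
  c + d * \sum_(x <- pol I0 hist p) x.1 * h x.2 <= exp_cost pol I0 hist (p :: ps).
Proof.
have [supp mass1] := pol_valid I0 hist p.
by move=> lb; rewrite /= -wsum_affine //; apply: ler_wsum supp lb.
Qed.

Lemma exp_cost_ge_const ps : forall hist inv c,
  (forall i, remaining I0 hist i <= inv i)%N ->
  (forall p m, List.In p ps -> feasible_dec inv p m -> c <= stage_cost p m) ->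
  c *+ size ps <= exp_cost pol I0 hist ps.
Proof.
elim: ps => [|p ps IH] hist inv c le_inv lb /=; first by rewrite mulr0n.
have := @exp_cost_cons_ge hist p ps (c *+ (size ps).+1) 0 (fun _ => 0).
rewrite !mul0r !addr0; apply=> m Fm; rewrite mulrS.
apply: lerD; first by apply: lb; [left | exact: feasible_decW Fm].
apply: IH => [i|q m' q_ps]; last by apply: lb; right.
exact: leq_trans (remaining_rcons _ _ _ _) (le_inv i).
Qed.

Lemma exp_cost_ge0 a b hist ps : 0 <= a -> costs_in a b ps ->
  0 <= exp_cost pol I0 hist ps.
Proof.
move=> a0 cps; rewrite -(mul0rn _ (size ps)).
apply: (exp_cost_ge_const (inv := remaining I0 hist)) => // q m q_ps Fm.
apply: stage_cost_ge0 (feasible_dec_le_ord Fm) _ => i.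
have [c0 c1] := costs_in_ge cps q_ps i.
by split; [exact: le_trans a0 c0 | exact: le_trans a0 c1].
Qed.

End Policy.

Lemma plan_cost_ge_demand a b N (ps : seq (period R N)) inv ms :
  costs_in a b ps -> plan_ok inv ps ms ->
  a * \sum_(p <- ps) \sum_i (ord p i)%:R <= plan_cost ps ms.
Proof.
elim: ps inv ms => [|p ps IH] inv [|m ms] //; first by rewrite big_nil mulr0.
move=> cps [Fm ok]; have /andP[_ cps'] := cps.
rewrite big_cons mulrDr lerD ?(IH _ _ cps' ok) //.
exact: stage_cost_ge_demand (feasible_dec_le_ord Fm) (costs_in_ge cps (or_introl erefl)).
Qed.

Lemma OPT_le_plan_cost a b N (I0 : 'I_N -> nat) ps ms : 0 <= a ->
  costs_in a b ps -> plan_ok I0 ps ms -> OPT I0 ps <= plan_cost ps ms.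
Proof.
move=> a0 cps ok; apply: ge_inf; last by exists ms.
exists 0 => _ [ms' [ok' ->]]; apply: le_trans (plan_cost_ge_demand cps ok').
by rewrite mulr_ge0 // !sumr_ge0 // => p _; rewrite sumr_ge0.
Qed.

Lemma demand_le_OPT a b N (I0 : 'I_N -> nat) ps ms :
  costs_in a b ps -> plan_ok I0 ps ms ->
  a * \sum_(p <- ps) \sum_i (ord p i)%:R <= OPT I0 ps.
Proof.
move=> cps ok; apply: lb_le_inf; first by exists (plan_cost ps ms), ms.
by move=> _ [ms' [ok' ->]]; exact: plan_cost_ge_demand cps ok'.
Qed.

Lemma lt_plan_cost_of_comp_ratio_lt a b c (pol : policy R) N (I0 : 'I_N -> nat)
    ps ms L :
  0 < a -> 0 <= c -> (comp_ratio f0 f1 a b pol < c%:E)%E ->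
  costs_in a b ps -> plan_ok I0 ps ms -> (0 < \sum_(p <- ps) \sum_i ord p i)%N ->
  L <= exp_cost pol I0 [::] ps -> L < c * plan_cost ps ms.
Proof.
move=> a0 c0 ratio_lt cps ok demand_gt0 L_le.
have OPT_gt0 : 0 < OPT I0 ps.
  apply: lt_le_trans (demand_le_OPT cps ok).
  by rewrite mulr_gt0 // -(eq_bigr _ (fun p _ => natr_sum _ _ _ _)) -natr_sum ltr0n.
apply: le_lt_trans L_le _.
apply: lt_le_trans (ler_wpM2l c0 (OPT_le_plan_cost (ltW a0) cps ok)).
rewrite -ltr_pdivrMr // -lte_fin; apply: le_lt_trans ratio_lt; apply: ereal_sup_ubound.
by exists (exp_cost pol I0 [::] ps / OPT I0 ps) => //; exists N, I0, ps.
Qed.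

Lemma stage_cost_ext N (p : period R N) m m' :
  (forall i, m i = m' i) -> stage_cost p m = stage_cost p m'.
Proof.
move=> e; rewrite /stage_cost /=.
by congr (_ + _ + _); [congr (if (0 < _)%N then _ else _) ..|];
  apply: eq_bigr => i _; rewrite e.
Qed.

Lemma stage_cost1_ge (p : period R 1) m : (m ord0 <= ord p ord0)%N ->
  cost0 p ord0 * (ord p ord0)%:R - (cost0 p ord0 - cost1 p ord0) * (m ord0)%:R
    <= stage_cost p m.
Proof.
move=> m_le; apply: le_trans (stage_cost_ge_var p m).
by rewrite big_ord1 natrB // mulrBr mulrBl; lra.
Qed.

End Costs.

Section Instances.
Variables (R : realType) (f0 f1 : R).
Local Notation stage_cost := (stage_cost f0 f1).
Local Notation plan_cost := (plan_cost f0 f1).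

Definition const_period n q (c0 c1 : R) : period R n :=
  Period (fun _ => q) (fun _ => c0) (fun _ => c1).

Definition unit_order n (j : 'I_n) : 'I_n -> nat := fun i => (i == j : nat).

Definition item_period n (j : 'I_n) (c : R) : period R n :=
  Period (unit_order j) (fun _ => c) (fun _ => c).

Lemma costs_in_const a b n q c0 c1 (ps : seq (period R n)) :
  a <= c0 <= b -> a <= c1 <= b -> costs_in a b ps ->
  costs_in a b (const_period n q c0 c1 :: ps).
Proof.
by move=> c0_ab c1_ab cps; apply/andP; split=> //; apply/forallP=> i /=; rewrite c0_ab.
Qed.

Lemma costs_in_items a b n c (s : seq 'I_n) :
  a <= c <= b -> costs_in a b [seq item_period j c | j <- s].
Proof.
move=> c_ab; rewrite /costs_in all_map; apply/allP=> j _ /=.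
by apply/forallP=> i /=; rewrite c_ab.
Qed.

Lemma stage_cost_const n q k c0 c1 : (0 < n)%N ->
  stage_cost (const_period n q c0 c1) (fun _ => k) =
    (if (k < q)%N then f0 else 0) + (if (0 < k)%N then f1 else 0)
    + n%:R * (c0 * (q - k)%:R + c1 * k%:R).
Proof.
move=> n_gt0; rewrite /stage_cost /= !sum_nat_const !sumr_const card_ord.
by rewrite !muln_gt0 n_gt0 subn_gt0 mulr_natl.
Qed.

Lemma stage_cost_item n (j : 'I_n) c :
  stage_cost (item_period j c) (unit_order j) = f1 + c.
Proof.
rewrite /stage_cost /=; under eq_bigr do rewrite subnn.
rewrite big1_eq add0r (bigD1 j) //= /unit_order eqxx big1 => [|i /negbTE -> //].
rewrite (bigD1 j) //= eqxx subnn mulr0 mulr1 add0r big1 ?addr0 // => i /negbTE ->.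
by rewrite subnn !mulr0 addr0.
Qed.

Lemma plan_ok_items n c (s : seq 'I_n) (inv : 'I_n -> nat) : uniq s ->
  (forall i, i \in s -> 0 < inv i)%N ->
  plan_ok inv [seq item_period j c | j <- s] [seq unit_order j | j <- s].
Proof.
elim: s inv => [|j s IH] //= inv /andP[j_s uniq_s] inv_gt0; split.
  apply/forallP => i /=; rewrite /unit_order leqnn /=.
  by case: eqP => [->|//]; rewrite inv_gt0 ?mem_head.
apply: IH => // i i_s /=; rewrite /unit_order.
have /negbTE -> : i != j by apply: contraNneq j_s => <-.
by rewrite subn0 inv_gt0 // inE i_s orbT.
Qed.

Lemma plan_cost_items n c (s : seq 'I_n) :
  plan_cost [seq item_period j c | j <- s] [seq unit_order j | j <- s] = (f1 + c) *+ size s.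
Proof. by elim: s => [|j s IH] //=; rewrite IH stage_cost_item mulrS. Qed.

End Instances.

Lemma restock_tradeoff (R : realFieldType) (a r Q mu f1 F : R) :
  0 < a -> 1 < r -> 0 <= Q ->
  a * r * Q - (a * r - a) * mu < 3^-1 * r * (f1 + a * Q) ->
  (a * r + a) * Q + (a * r * r - a * r) * mu < 3^-1 * r * (F + (a * r + a) * Q) ->
  Q * (a * a * (r - 1)) <= 3^-1 * r * ((a * r * r - a * r) * f1 + (a * r - a) * F).
Proof.
move=> a_gt0 r_gt1 Q_ge0 hA hB.
have d_ge0 : 0 <= a * a * (r - 1) by rewrite !mulr_ge0 ?subr_ge0 ?ltW.
have wA : 0 <= a * r * r - a * r.
  by rewrite -[X in _ - X]mulr1 -mulrBr !mulr_ge0 ?subr_ge0 ?ltW // (lt_trans ltr01).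
have wB : 0 <= a * r - a by rewrite -[X in _ - X]mulr1 -mulrBr mulr_ge0 ?subr_ge0 ?ltW.
(* With [x = a r] and [b = a r r], weighting the scenarios by [b - x] and
   [x - a] eliminates [mu]. *)
have := ler_wpM2l wA (ltW hA); have := ler_wpM2l wB (ltW hB).
have r_ge0 : 0 <= r by rewrite ltW // (lt_trans ltr01).
have : 0 <= Q * (a * a * (r - 1)) * (r * r + 2 * r).
  by apply: mulr_ge0; [exact: mulr_ge0 | rewrite addr_ge0 ?mulr_ge0].
lra.
Qed.

Lemma fixed_cost_tradeoff (R : realFieldType) (f0 f1 a X m : R) (n : nat) :
  0 <= f0 -> 0 < a -> (2 <= n)%N -> 0 <= m -> m <= n%:R -> m * (f1 + n%:R * a) <= f0 ->
  f0 - X < 4^-1 * m * (f1 + n%:R * a) ->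
  f0 + (n%:R - 1) * X < 4^-1 * m * (f0 + n%:R * a + n%:R * (f1 + a)) -> False.
Proof.
move=> f0_ge0 a_gt0 n_ge2 m_ge0 m_le_n mD_le hA hB.
have n_ge2R : 2 <= n%:R :> R by rewrite (ler_nat R 2).
have n1_ge0 : 0 <= n%:R - 1 :> R by rewrite subr_ge0 (le_trans _ n_ge2R) // ler1n.
(* The first scenario forces [X > 3 f0 / 4], the second [X < f0 / 2]. *)
have hA' : f0 - X < 4^-1 * f0 by lra.
have hB' : f0 + (n%:R - 1) * X < 2^-1 * n%:R * f0.
  have := ler_wpM2l m_ge0 (ler_wpM2l (ler0n _ n) (ler_wpM2r (ltW a_gt0) n_ge2R)).
  have := ler_wpM2l (ler0n _ n) mD_le; have := ler_wpM2r f0_ge0 m_le_n.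
  nra.
have := ler_wpM2l n1_ge0 (ltW hA'); nra.
Qed.

Section LowerBounds.
Variables (R : realType) (f0 f1 a b : R) (pol : policy R).
Hypotheses (f0_ge0 : 0 <= f0) (f1_ge0 : 0 <= f1) (a_gt0 : 0 < a) (lt_ab : a < b).
Hypothesis pol_valid : valid_policy pol.
Local Notation stage_cost := (stage_cost f0 f1).
Local Notation exp_cost := (exp_cost f0 f1).
Local Notation comp_ratio := (comp_ratio f0 f1 a b pol).

Let a_ab : a <= a <= b. Proof. by rewrite lexx ltW. Qed.

Lemma comp_ratio_ge1 : (1%:E <= comp_ratio)%E.
Proof.
pose P := const_period 1 1 a a; pose I0 : 'I_1 -> nat := fun _ => 0%N.
have cost_P m : (forall i, m i = 0%N) -> stage_cost P m = f0 + a.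
  move=> m0; rewrite (stage_cost_ext _ _ _ m0) stage_cost_const //=.
  by rewrite mulr0 mulr1 mul1r !addr0.
have cP : costs_in a b [:: P] by apply: costs_in_const.
rewrite leNgt; apply/negP => ratio_lt1.
suff : f0 + a < 1 * plan_cost f0 f1 [:: P] [:: fun _ => 0%N].
  by rewrite /= cost_P // addr0 mul1r ltxx.
apply: (lt_plan_cost_of_comp_ratio_lt f0_ge0 f1_ge0 (I0 := I0) a_gt0 ler01 ratio_lt1 cP).
- by split=> //; apply/forallP.
- by rewrite big_seq1 big_ord1.
rewrite -[X in X <= _]mulr1n.
apply: (exp_cost_ge_const pol_valid (ps := [:: P]) (inv := fun _ => 0%N)) => // p m.
move=> [<-|//] Fm.
by rewrite cost_P // => i; apply/eqP; rewrite -leqn0 (feasible_dec_le_inv Fm).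
Qed.

Lemma single_item_scenarios (c x : R) (Q : nat) : (0 < Q)%N -> a <= x <= b -> 0 <= c ->
  (comp_ratio < c%:E)%E ->
  exists mu : R,
    x * Q%:R - (x - a) * mu < c * (f1 + a * Q%:R) /\
    (x + a) * Q%:R + (b - x) * mu < c * (f0 + f1 + (x + a) * Q%:R).
Proof.
move=> Q_gt0 x_ab c_ge0 ratio_lt.
pose I0 : 'I_1 -> nat := fun _ => Q.
pose P1 := const_period 1 Q x a; pose P2 := const_period 1 Q b a.
have b_ab : a <= b <= b by rewrite lexx ltW.
have c1 : costs_in a b [:: P1] by apply: costs_in_const.
have c12 : costs_in a b [:: P1; P2] by apply: costs_in_const => //; apply: costs_in_const.
have first_stage m : feasible_dec (remaining (R:=R) I0 [::]) P1 m ->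
    x * Q%:R - (x - a) * (m ord0)%:R <= stage_cost P1 m.
  by move=> /feasible_dec_le_ord/(_ ord0); apply: stage_cost1_ge.
exists (\sum_(y <- pol I0 [::] P1) y.1 * (y.2 ord0)%:R); split.
  have <- : plan_cost f0 f1 [:: P1] [:: fun _ => Q] = f1 + a * Q%:R.
    by rewrite /= stage_cost_const // ltnn Q_gt0 subnn; lra.
  apply: (lt_plan_cost_of_comp_ratio_lt f0_ge0 f1_ge0 (I0 := I0) a_gt0 c_ge0 ratio_lt c1).
  - by split=> //; apply/forallP => i; rewrite /= leqnn.
  - by rewrite big_seq1 big_ord1.
  rewrite -mulNr; apply: (exp_cost_cons_ge pol_valid (h := fun m => (m ord0)%:R)) => m Fm.
  by rewrite addr0 mulNr first_stage.
have <- : plan_cost f0 f1 [:: P1; P2] [:: fun _ => 0%N; fun _ => Q]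
    = f0 + f1 + (x + a) * Q%:R.
  by rewrite /= !stage_cost_const // !ltnn Q_gt0 subnn subn0; lra.
apply: (lt_plan_cost_of_comp_ratio_lt f0_ge0 f1_ge0 (I0 := I0) a_gt0 c_ge0 ratio_lt c12).
- by split; [apply/forallP | split=> //; apply/forallP => i; rewrite /= subn0 leqnn].
- by rewrite big_cons big_seq1 !big_ord1 addn_gt0 Q_gt0.
apply: (exp_cost_cons_ge pol_valid (h := fun m => (m ord0)%:R)) => m Fm.
have m_le : (m ord0 <= Q)%N := feasible_dec_le_ord Fm ord0.
suff : a * Q%:R + (b - a) * (m ord0)%:R <= exp_cost pol I0 [:: (P1, m)] [:: P2].
  by have := first_stage m Fm; lra.
rewrite -[X in X <= _]mulr1n.
apply: (exp_cost_ge_const pol_valid (ps := [:: P2]) (inv := fun _ => Q - m ord0)%N).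
  by move=> i; rewrite /remaining big_seq1 (ord1 i).
move=> _ m' [<-|//] Fm'.
have : (m ord0 + m' ord0 <= Q)%N by rewrite -leq_subRL // (feasible_dec_le_inv Fm').
rewrite -(ler_nat R) natrD => sum_le.
apply: le_trans (stage_cost1_ge f0_ge0 f1_ge0 (feasible_dec_le_ord Fm' ord0)) => /=.
have : 0 <= b - a by rewrite subr_ge0 ltW.
by move/ler_wpM2l/(_ _ _ sum_le); lra.
Qed.

Lemma comp_ratio_ge_sqrt : ((3^-1 * Num.sqrt (b / a))%:E <= comp_ratio)%E.
Proof.
set r := Num.sqrt (b / a).
have a_ge0 : 0 <= a := ltW a_gt0.
have ba_gt1 : 1 < b / a by rewrite ltr_pdivlMr // mul1r.
have r_gt1 : 1 < r by rewrite /r -sqrtr1 ltr_sqrt // (lt_trans ltr01 ba_gt1).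
have b_eq : b = a * r * r.
  rewrite -mulrA -expr2 sqr_sqrtr ?(ltW (lt_trans ltr01 ba_gt1)) //.
  by rewrite mulrC divfK // gt_eqF.
have r_gt0 : 0 < r := lt_trans ltr01 r_gt1.
have r_ge0 : 0 <= r := ltW r_gt0.
have r1_ge0 : 0 <= r - 1 by rewrite subr_ge0 ltW.
have x_ab : a <= a * r <= b.
  have r_ge1 := ltW r_gt1.
  by rewrite ler_peMr //= [X in _ <= X]b_eq ler_peMr // mulr_ge0.
have c_ge0 : 0 <= 3^-1 * r by rewrite mulr_ge0.
set K := (a * r * r - a * r) * f1 + (a * r - a) * (f0 + f1).
have K_ge0 : 0 <= K.
  have : 0 <= a * r * (r - 1) * f1 by rewrite !mulr_ge0.
  have : 0 <= a * (r - 1) * (f0 + f1).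
    by apply: mulr_ge0; [exact: mulr_ge0 | exact: addr_ge0].
  rewrite /K; lra.
have d_gt0 : 0 < a * a * (r - 1) by rewrite !mulr_gt0 // subr_gt0.
pose Q := Num.bound (3^-1 * r * K / (a * a * (r - 1))).
have /archi_boundP Q_large : 0 <= 3^-1 * r * K / (a * a * (r - 1)).
  by rewrite divr_ge0 ?mulr_ge0 // ltW.
have Q_gt0 : (0 < Q)%N.
  by rewrite -(ltr0n R); apply: le_lt_trans Q_large; rewrite divr_ge0 ?mulr_ge0 // ltW.
rewrite leNgt; apply/negP => ratio_lt.
have [mu [hA hB]] := single_item_scenarios Q_gt0 x_ab c_ge0 ratio_lt.
rewrite [in b - _]b_eq in hB.
have := restock_tradeoff a_gt0 r_gt1 (ler0n _ Q) hA hB.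
by rewrite leNgt -ltr_pdivrMr // Q_large.
Qed.

Section ManyItems.
Variable n : nat.
Hypothesis n_gt0 : (0 < n)%N.
Local Notation I0 := (fun _ : 'I_n => 1%N).
Local Notation P := (const_period n 1 a a).
Local Notation items := [seq item_period j a | j <- enum 'I_n].

Let emptied (m : dec n) : bool := [forall i, m i == 1%N].

Lemma emptying_first_stage m : feasible_dec (remaining (R:=R) I0 [::]) P m ->
  f0 - f0 *+ emptied m <= stage_cost P m.
Proof.
move=> Fm; rewrite /emptied; case: (boolP [forall i, _]) => [_ | /forallPn[i mi]].
  rewrite subrr; apply: (stage_cost_ge0 f0_ge0 f1_ge0 (feasible_dec_le_ord Fm)) => i.
  by split; apply: ltW.
rewrite subr0; apply: (stage_cost_ge_f0 f0 f1_ge0 (i := i)) => [|j].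
  by have := feasible_dec_le_ord Fm i; rewrite /= leq_eqVlt (negbTE mi).
by split; apply: ltW.
Qed.

Lemma emptying_later_stages m : feasible_dec (remaining (R:=R) I0 [::]) P m ->
  n%:R * (f0 *+ emptied m) <= exp_cost pol I0 [:: (P, m)] items.
Proof.
move=> Fm; rewrite /emptied; case: (boolP [forall i, _]) => [/forallP m1 | _]; last first.
  rewrite mulr0n mulr0; apply: (exp_cost_ge0 f0_ge0 f1_ge0 _ pol_valid _ (ltW a_gt0)).
  by apply: (costs_in_items (b := b)); rewrite lexx ltW.
rewrite mulr1n mulr_natl -[X in _ *+ X]size_enum_ord.
rewrite -(size_map (fun j => item_period j a)).
apply: (exp_cost_ge_const pol_valid (inv := fun _ => 0%N)).
  by move=> i; rewrite /remaining big_seq1 /= (eqP (m1 i)) subnn.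
move=> _ m' /List.in_map_iff[j [<- _]] Fm'.
apply: (stage_cost_ge_f0 f0 f1_ge0 (i := j)) => [|i]; last by split; apply: ltW.
by rewrite /= /unit_order eqxx ltnS (feasible_dec_le_inv Fm').
Qed.

Lemma many_items_scenarios c : 0 <= c -> (comp_ratio < c%:E)%E ->
  exists X : R,
    f0 - X < c * (f1 + n%:R * a) /\
    f0 + (n%:R - 1) * X < c * (f0 + n%:R * a + n%:R * (f1 + a)).
Proof.
move=> c_ge0 ratio_lt.
have cP : costs_in a b [:: P] by apply: costs_in_const.
have cPitems : costs_in a b (P :: items).
  by apply: costs_in_const => //; apply: costs_in_items.
exists (\sum_(y <- pol I0 [::] P) y.1 * (f0 *+ emptied y.2)); split.
  have <- : plan_cost f0 f1 [:: P] [:: fun _ => 1%N] = f1 + n%:R * a.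
    by rewrite /= stage_cost_const // subnn mulr0 mulr1 !addr0 !add0r.
  apply: (lt_plan_cost_of_comp_ratio_lt f0_ge0 f1_ge0 (I0 := I0) a_gt0 c_ge0 ratio_lt cP).
  - by split=> //; apply/forallP.
  - by rewrite big_seq1 sum_nat_const card_ord muln1.
  rewrite -mulN1r; apply: (exp_cost_cons_ge pol_valid (h := fun m => f0 *+ emptied m)).
  by move=> m Fm; rewrite addr0 mulN1r emptying_first_stage.
have <- : plan_cost f0 f1 (P :: items)
      ((fun _ => 0%N) :: [seq unit_order j | j <- enum 'I_n])
    = f0 + n%:R * a + n%:R * (f1 + a).
  rewrite [LHS]/= plan_cost_items stage_cost_const // size_enum_ord subn0 mulr0 mulr1.
  by rewrite addr0 addr0 !mulr_natl.
apply: (lt_plan_cost_of_comp_ratio_lt f0_ge0 f1_ge0 (I0 := I0) a_gt0 c_ge0 ratio_lt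
  cPitems).
- by split; [apply/forallP | apply: plan_ok_items; rewrite ?enum_uniq].
- by rewrite big_cons sum_nat_const card_ord muln1 addn_gt0 n_gt0.
apply: (exp_cost_cons_ge pol_valid (h := fun m => f0 *+ emptied m)) => m Fm.
have := emptying_first_stage Fm; have := emptying_later_stages Fm; lra.
Qed.

End ManyItems.

Lemma comp_ratio_ge_fixed_cost n : (2 <= n)%N ->
  ((4^-1 * Num.min n%:R (f0 / (f1 + n%:R * a)))%:E <= comp_ratio)%E.
Proof.
move=> n_ge2; set m := Num.min _ _.
have D_gt0 : 0 < f1 + n%:R * a by rewrite ltr_wpDl // mulr_gt0 // ltr0n ltnW.
have m_ge0 : 0 <= m by rewrite le_min ler0n divr_ge0 // ltW.
rewrite leNgt; apply/negP => ratio_lt.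
have c_ge0 : 0 <= 4^-1 * m by rewrite mulr_ge0.
have [X [hA hB]] := many_items_scenarios (ltnW n_ge2) c_ge0 ratio_lt.
apply: (fixed_cost_tradeoff f0_ge0 a_gt0 n_ge2 m_ge0 _ _ hA hB).
  by rewrite ge_min lexx.
by rewrite -ler_pdivlMr // ge_min lexx orbT.
Qed.

End LowerBounds.

Theorem theorem7 (R : realType) (f0 f1 a b : R) (pol : policy R) :
  0 <= f0 -> 0 <= f1 -> 0 < a -> a < b -> valid_policy pol ->
  [/\ (1%:E <= comp_ratio f0 f1 a b pol)%E,
      ((3^-1 * Num.sqrt (b / a))%:E <= comp_ratio f0 f1 a b pol)%E &
      forall n : nat, (2 <= n)%N ->
        ((4^-1 * Num.min (n%:R) (f0 / (f1 + n%:R * a)))%:E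
           <= comp_ratio f0 f1 a b pol)%E].
Proof.
move=> f0_ge0 f1_ge0 a_gt0 lt_ab pol_valid; split.
- exact: comp_ratio_ge1.
- exact: comp_ratio_ge_sqrt.
- exact: comp_ratio_ge_fixed_cost.
Qed.
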